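(* Let $(X,\tau)$ be a topological space, $\delta$ a quasi-proximity compatible with $\tau$ such that $\mathcal{V}_\delta$ is transitive, and suppose $N_i\in\mathcal{B}(\mathcal{V}_\delta)$ ($i\in\mathbb{N}$) satisfy $N_i\subsetneq N_{i+1}$ and $\bigcup_{i}N_i\in\mathcal{B}(\mathcal{V}_\delta)$. For $A\subseteq\mathbb{N}$ let $\alpha_A=\{X\}\cup\{N_i:i\notin A\}$ and let $U_A$ be the relation with $U_A(x)=\bigcap\{M\in\alpha_A:x\in M\}$. For a p-filter $\sigma$ on $\mathbb{N}$ let $\mathcal{V}_\sigma$ be the filter on $X\times X$ generated by $\mathcal{V}_\delta\cup\{U_A:A\in\sigma\}$. Then each $\mathcal{V}_\sigma$ belongs to $\pi(\delta)\cap T(\tau)$, and for p-filters $\sigma_1,\sigma_2$, $\mathcal{V}_{\sigma_1}\subseteq\mathcal{V}_{\sigma_2}$ implies $\sigma_1\subseteq\sigma_2$; in particular $\sigma\mapsto\mathcal{V}_\sigma$ is injective.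
   Context: Quasi-uniformities and quasi-proximities are in the sense of Fletcher–Lindgren. $\pi(\delta)$ is the set of quasi-uniformities inducing $\delta$, $\mathcal{V}_\delta$ its coarsest element; $T(\tau)$ the set of compatible quasi-uniformities with a base of transitive entourages. For $N\subseteq X$, $U_N=(N\times N)\cup((X\setminus N)\times X)$ and $\mathcal{B}(\mathcal{V}_\delta)=\{N\in\tau:U_N\in\mathcal{V}_\delta\}$. For $N\subseteq\mathbb{N}$, an $N$-pile is a subset $H\subseteq N$ that is maximal with respect to the property: $i,j\in H$, $i<k<j$, $k\in\mathbb{N}$ imply $k\in H$. A set $Z\subseteq\mathbb{N}$ is admissible for $N$ if there is $k\in\mathbb{N}$ with $|H\cap Z|\le k$ for every $N$-pile $H$. A filter $\sigma$ on $\mathbb{N}$ is a p-filter if whenever $N\in\sigma$ and $Z$ is admissible for $N$, then $N\setminus Z\in\sigma$. *)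

From Stdlib Require Import List Classical.
Import ListNotations.

Definition set (X : Type) := X -> Prop.
Definition rel (X : Type) := X -> X -> Prop.

Definition subset {X} (A B : set X) := forall x, A x -> B x.
Definition rsubset {X} (U V : rel X) := forall x y, U x y -> V x y.

Definition is_topology {X} (tau : set (set X)) : Prop :=
  tau (fun _ => True) /\
  (forall G H, tau G -> tau H -> tau (fun x => G x /\ H x)) /\
  (forall F : set (set X), (forall G, F G -> tau G) ->
      tau (fun x => exists G, F G /\ G x)).

Definition is_quasi_proximity {X} (delta : set X -> set X -> Prop) : Prop :=
  (forall A B C, delta A (fun x => B x \/ C x) <-> (delta A B \/ delta A C)) /\
  (forall A B C, delta (fun x => A x \/ B x) C <-> (delta A C \/ delta B C)) /\
  (forall A B, delta A B -> (exists a, A a) /\ (exists b, B b)) /\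
  (forall A B, (exists x, A x /\ B x) -> delta A B) /\
  (forall A B, ~ delta A B ->
     exists C, ~ delta A C /\ ~ delta (fun x => ~ C x) B).

(** Topology induced by a quasi-proximity: cl A = {x | {x} delta A}. *)
Definition qp_topology {X} (delta : set X -> set X -> Prop) : set (set X) :=
  fun G => forall x, G x -> ~ delta (fun y => y = x) (fun y => ~ G y).

Definition qp_compatible {X} (delta : set X -> set X -> Prop) (tau : set (set X)) :=
  forall G, tau G <-> qp_topology delta G.

Definition is_rel_filter {X} (F : set (rel X)) : Prop :=
  F (fun _ _ => True) /\
  (forall U V, F U -> rsubset U V -> F V) /\
  (forall U V, F U -> F V -> F (fun x y => U x y /\ V x y)).

Definition rcomp {X} (V W : rel X) : rel X := fun x z => exists y, V x y /\ W y z.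

Definition is_quasi_uniformity {X} (QU : set (rel X)) : Prop :=
  is_rel_filter QU /\
  (forall U, QU U -> forall x, U x x) /\
  (forall U, QU U -> exists V, QU V /\ rsubset (rcomp V V) U).

Definition qu_topology {X} (QU : set (rel X)) : set (set X) :=
  fun G => forall x, G x -> exists U, QU U /\ forall y, U x y -> G y.

Definition qu_compatible {X} (QU : set (rel X)) (tau : set (set X)) :=
  is_quasi_uniformity QU /\ forall G, tau G <-> qu_topology QU G.

Definition qu_qprox {X} (QU : set (rel X)) : set X -> set X -> Prop :=
  fun A B => forall U, QU U -> exists a b, A a /\ B b /\ U a b.

Definition in_pi {X} (delta : set X -> set X -> Prop) (QU : set (rel X)) :=
  is_quasi_uniformity QU /\ forall A B, qu_qprox QU A B <-> delta A B.

Definition is_coarsest_in_pi {X} (delta : set X -> set X -> Prop) (V : set (rel X)) :=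
  in_pi delta V /\ forall W, in_pi delta W -> forall U, V U -> W U.

Definition transitive_rel {X} (U : rel X) := rsubset (rcomp U U) U.

Definition has_transitive_base {X} (QU : set (rel X)) :=
  forall U, QU U -> exists V, QU V /\ transitive_rel V /\ rsubset V U.

Definition in_T {X} (tau : set (set X)) (QU : set (rel X)) :=
  qu_compatible QU tau /\ has_transitive_base QU.

Definition U_of {X} (N : set X) : rel X := fun x y => (N x /\ N y) \/ ~ N x.

Definition in_B {X} (tau : set (set X)) (V : set (rel X)) (N : set X) :=
  tau N /\ V (U_of N).

Definition gen_filter {X} (S : set (rel X)) : set (rel X) :=
  fun W => exists l : list (rel X), (forall U, In U l -> S U) /\
     forall x y, (forall U, In U l -> U x y) -> W x y.

Definition is_nat_filter (sigma : set (set nat)) : Prop :=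
  sigma (fun _ => True) /\ ~ sigma (fun _ => False) /\
  (forall A B, sigma A -> subset A B -> sigma B) /\
  (forall A B, sigma A -> sigma B -> sigma (fun n => A n /\ B n)).

Definition convex_nat (H : set nat) :=
  forall i j k, H i -> H j -> i < k < j -> H k.

Definition is_pile (N H : set nat) :=
  subset H N /\ convex_nat H /\
  forall H', subset H H' -> subset H' N -> convex_nat H' -> subset H' H.

Definition card_le {T} (A : set T) (k : nat) :=
  forall l : list T, NoDup l -> (forall x, In x l -> A x) -> length l <= k.

Definition admissible (N Z : set nat) :=
  exists k, forall H, is_pile N H -> card_le (fun n => H n /\ Z n) k.

Definition is_p_filter (sigma : set (set nat)) :=
  is_nat_filter sigma /\
  forall N Z, sigma N -> admissible N Z -> sigma (fun n => N n /\ ~ Z n).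

Definition U_A {X} (Nseq : nat -> set X) (A : set nat) : rel X :=
  fun x y => forall i, ~ A i -> Nseq i x -> Nseq i y.

Definition V_sigma {X} (Vd : set (rel X)) (Nseq : nat -> set X) (sigma : set (set nat))
  : set (rel X) :=
  gen_filter (fun U => Vd U \/ exists A, sigma A /\ U = U_A Nseq A).

From Stdlib Require Import List Classical Lia PeanoNat Compare_dec.
From Stdlib Require Import FunctionalExtensionality PropExtensionality
  IndefiniteDescription ClassicalDescription.
Import ListNotations.

(* The coarsest element V_δ of π(δ) lies in the filter generated by the
   complements of far rectangles A × B, so each of its entourages contains one
   that only avoids finitely many far pairs.  Splitting along these pairs, any
   near pair A δ B has witnesses a ∈ A, b ∈ B avoiding them which moreover
   satisfy "a ∈ N_i ⇒ b ∈ N_i" for every i (this uses U_{N_i}, U_{⋃N_i} ∈ V_δ).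
   Hence the entourages U_A do not change the induced quasi-proximity, and
   V_σ ∈ π(δ) ∩ T(τ).

   For injectivity pick p_i ∈ N_{i+1} ∖ N_i.  If V ∩ U_S ⊆ U_A with S ∈ σ₂ and V
   containing an entourage that avoids k far pairs, then two indices i < j of
   ℕ ∖ A in one S-pile whose points p_i, p_j have the same pattern of membership
   in the k second components would satisfy U_A(p_i, p_j), which fails at N_j.
   So every S-pile meets ℕ ∖ A in at most 2^k points, and as σ₂ is a p-filter,
   S ∖ (ℕ ∖ A) ⊆ A belongs to σ₂. *)

Lemma set_ext {X} (A B : set X) : (forall x, A x <-> B x) -> A = B.
Proof.
  intros H. apply functional_extensionality. intros x.
  apply propositional_extensionality, H.
Qed.

Section QuasiProximity.
Context {X : Type} (d : set X -> set X -> Prop).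
Hypothesis Hq : is_quasi_proximity d.

Lemma qp_mono A B A' B' : d A B -> subset A A' -> subset B B' -> d A' B'.
Proof.
  intros HAB HA HB. pose proof Hq as (Hr & Hl & _).
  assert (EA : A' = (fun x => A x \/ A' x)) by (apply set_ext; firstorder).
  assert (EB : B' = (fun x => B x \/ B' x)) by (apply set_ext; firstorder).
  assert (HA'B : d A' B) by (rewrite EA; apply Hl; left; exact HAB).
  rewrite EB. apply Hr. left. exact HA'B.
Qed.

Lemma qp_split A B (C D : set X) : d A B ->
  d (fun x => A x /\ C x) (fun y => B y /\ D y) \/
  d (fun x => A x /\ ~ C x) B \/ d A (fun y => B y /\ ~ D y).
Proof.
  intros HAB. pose proof Hq as (Hr & Hl & _).
  assert (HC : d (fun x => A x /\ C x) B \/ d (fun x => A x /\ ~ C x) B).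
  { apply Hl. eapply qp_mono; [exact HAB | | intros y Hy; exact Hy].
    intros x Hx. destruct (classic (C x)); auto. }
  destruct HC as [HC | HC]; [|auto].
  assert (HD : d (fun x => A x /\ C x) (fun y => B y /\ D y) \/
               d (fun x => A x /\ C x) (fun y => B y /\ ~ D y)).
  { apply Hr. eapply qp_mono; [exact HC | intros x Hx; exact Hx |].
    intros y Hy. destruct (classic (D y)); auto. }
  destruct HD as [HD | HD]; [auto|].
  right; right. eapply qp_mono; [exact HD | intros x [Hx _]; exact Hx | intros y Hy; exact Hy].
Qed.

Definition avoids (cs : list (set X * set X)) (x y : X) : Prop :=
  forall p, In p cs -> ~ (fst p x /\ snd p y).

Definition far_pairs (cs : list (set X * set X)) : Prop :=
  forall p, In p cs -> ~ d (fst p) (snd p).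

Lemma near_witness_avoiding (R : rel X) :
  (forall A B, d A B -> exists a b, A a /\ B b /\ R a b) ->
  forall cs, far_pairs cs -> forall A B, d A B ->
  exists a b, A a /\ B b /\ avoids cs a b /\ R a b.
Proof.
  intros HR cs. induction cs as [|[C D] cs IH]; intros Hfar A B HAB.
  - destruct (HR A B HAB) as (a & b & Ha & Hb & Hab).
    exists a, b. repeat split; auto. intros p [].
  - assert (Hfar' : far_pairs cs) by (intros p Hp; apply Hfar; right; exact Hp).
    assert (HCD : ~ d C D) by exact (Hfar (C, D) (or_introl eq_refl)).
    destruct (qp_split A B C D HAB) as [Hnear | [Hnear | Hnear]].
    + exfalso. apply HCD.
      eapply qp_mono; [exact Hnear | intros x Hx; apply Hx | intros y Hy; apply Hy].
    + destruct (IH Hfar' _ _ Hnear) as (a & b & [Ha HCa] & Hb & Hav & Hab).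
      exists a, b. repeat split; auto.
      intros p [<- | Hp]; [simpl; tauto | apply Hav, Hp].
    + destruct (IH Hfar' _ _ Hnear) as (a & b & Ha & [Hb HDb] & Hav & Hab).
      exists a, b. repeat split; auto.
      intros p [<- | Hp]; [simpl; tauto | apply Hav, Hp].
Qed.

Lemma avoids_of_agree cs x y : far_pairs cs ->
  (forall p, In p cs -> snd p y -> snd p x) -> avoids cs x y.
Proof.
  intros Hfar Hagree p Hp [Hx Hy]. pose proof Hq as (_ & _ & _ & Hmeet & _).
  apply (Hfar p Hp), Hmeet. exists x. split; [exact Hx | apply Hagree; assumption].
Qed.

End QuasiProximity.

Section GeneratedFilter.
Context {X : Type} (S : set (rel X)).

Lemma gen_filter_base U : S U -> gen_filter S U.
Proof.
  intros HU. exists [U]. split.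
  - intros V [<- | []]. exact HU.
  - intros x y Hl. apply Hl. left. reflexivity.
Qed.

Lemma gen_filter_is_rel_filter : is_rel_filter (gen_filter S).
Proof.
  split; [|split].
  - exists []. split; [intros _ [] | auto].
  - intros U V [l [Hl HU]] HUV. exists l. split; [exact Hl|].
    intros x y H. apply HUV, HU, H.
  - intros U V [l1 [Hl1 HU]] [l2 [Hl2 HV]]. exists (l1 ++ l2). split.
    + intros W HW. apply in_app_or in HW. destruct HW; auto.
    + intros x y Hl. split; [apply HU | apply HV]; intros W HW; apply Hl, in_or_app; auto.
Qed.

Lemma gen_filter_least (F : set (rel X)) : is_rel_filter F -> (forall U, S U -> F U) ->
  forall W, gen_filter S W -> F W.
Proof.
  intros (Ftop & Fup & Fmeet) HSF W [l [Hl HW]]. eapply Fup; [|exact HW].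
  clear HW. induction l as [|U l IH].
  - apply (Fup _ _ Ftop). intros x y _ U [].
  - apply (Fup (fun x y => U x y /\ forall V, In V l -> V x y)).
    + apply Fmeet; [apply HSF, Hl; left; reflexivity|].
      apply IH. intros V HV. apply Hl. right. exact HV.
    + intros x y [HU Hrest] V [<- | HV]; [exact HU | exact (Hrest V HV)].
Qed.

Lemma gen_filter_quasi_uniformity :
  (forall U, S U -> forall x, U x x) ->
  (forall U, S U -> exists V, gen_filter S V /\ rsubset (rcomp V V) U) ->
  is_quasi_uniformity (gen_filter S).
Proof.
  intros Hrefl Hroot. split; [exact gen_filter_is_rel_filter | split].
  - apply (gen_filter_least (fun U => forall x, U x x)); [|exact Hrefl]. split; [|split].
    + intros _. exact I.
    + intros U V HU HUV x. apply HUV, HU.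
    + intros U V HU HV x. split; auto.
  - apply (gen_filter_least (fun U => exists V, gen_filter S V /\ rsubset (rcomp V V) U));
      [|exact Hroot].
    split; [|split].
    + exists (fun _ _ => True). split; [apply gen_filter_is_rel_filter | intros _ _ _; exact I].
    + intros U V [W [HW HWU]] HUV. exists W. split; [exact HW|].
      intros x z H. apply HUV, HWU, H.
    + intros U V [W1 [HW1 H1]] [W2 [HW2 H2]]. exists (fun x y => W1 x y /\ W2 x y). split.
      * apply gen_filter_is_rel_filter; assumption.
      * intros x z [y [[Hxy1 Hxy2] [Hyz1 Hyz2]]].
        split; [apply H1 | apply H2]; exists y; auto.
Qed.

End GeneratedFilter.

Section ProximalEntourages.
Context {X : Type} (d : set X -> set X -> Prop).
Hypothesis Hq : is_quasi_proximity d.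

Definition far_rel (A B : set X) : rel X := fun x y => ~ (A x /\ B y).

Definition prox_entourages : set (rel X) :=
  gen_filter (fun U => exists A B, ~ d A B /\ U = far_rel A B).

Lemma prox_entourage_avoids W : prox_entourages W ->
  exists cs, far_pairs d cs /\ rsubset (avoids cs) W.
Proof.
  revert W. apply (gen_filter_least _ (fun W => exists cs, far_pairs d cs /\ rsubset (avoids cs) W)).
  - split; [|split].
    + exists []. split; [intros _ [] | intros _ _ _; exact I].
    + intros U V [cs [Hcs HU]] HUV. exists cs. split; [exact Hcs|].
      intros x y H. apply HUV, HU, H.
    + intros U V [cs1 [H1 HU]] [cs2 [H2 HV]]. exists (cs1 ++ cs2). split.
      * intros p Hp. apply in_app_or in Hp. destruct Hp; auto.
      * intros x y Hav. split; [apply HU | apply HV]; intros p Hp; apply Hav, in_or_app; auto.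
  - intros U (A & B & HAB & ->). exists [(A, B)]. split.
    + intros p [<- | []]. exact HAB.
    + intros x y Hav. exact (Hav (A, B) (or_introl eq_refl)).
Qed.

Lemma prox_entourages_in_pi : in_pi d prox_entourages.
Proof.
  pose proof Hq as (_ & _ & Hne & Hmeet & Hmid). split.
  - apply gen_filter_quasi_uniformity.
    + intros U (A & B & HAB & ->) x [HA HB]. apply HAB, Hmeet. exists x. auto.
    + intros U (A & B & HAB & ->). destruct (Hmid A B HAB) as [C [HAC HCB]].
      exists (fun x y => far_rel A C x y /\ far_rel (fun z => ~ C z) B x y). split.
      * apply gen_filter_is_rel_filter; apply gen_filter_base; eauto.
      * intros x z [y [[HAC' _] [_ HCB']]] [HAx HBz].
        apply HCB'. split; [|exact HBz]. intros HCy. apply HAC'. auto.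
  - intros A B. split.
    + intros Hnear. apply NNPP. intros HAB.
      destruct (Hnear (far_rel A B)) as (a & b & Ha & Hb & Hab).
      * apply gen_filter_base. eauto.
      * exact (Hab (conj Ha Hb)).
    + intros HAB U HU. destruct (prox_entourage_avoids U HU) as [cs [Hcs HU']].
      destruct (near_witness_avoiding d Hq (fun _ _ => True)) with (cs := cs) (A := A) (B := B)
        as (a & b & Ha & Hb & Hav & _); auto.
      * intros A' B' H'. destruct (Hne _ _ H') as [[a Ha] [b Hb]]. exists a, b. auto.
      * exists a, b. auto.
Qed.

Lemma coarsest_entourage_avoids Vd U : is_coarsest_in_pi d Vd -> Vd U ->
  exists cs, far_pairs d cs /\ rsubset (avoids cs) U.
Proof.
  intros [_ Hcoarsest] HU. apply prox_entourage_avoids, (Hcoarsest _ prox_entourages_in_pi), HU.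
Qed.

End ProximalEntourages.

Lemma qu_qprox_antitone {X} (QU1 QU2 : set (rel X)) A B :
  (forall U, QU1 U -> QU2 U) -> qu_qprox QU2 A B -> qu_qprox QU1 A B.
Proof. intros Hsub Hnear U HU. apply Hnear, Hsub, HU. Qed.

Lemma in_pi_qu_compatible {X} d (QU : set (rel X)) tau :
  in_pi d QU -> qp_compatible d tau -> qu_compatible QU tau.
Proof.
  intros [Hqu Hprox] Hcomp. split; [exact Hqu|]. intros G. rewrite (Hcomp G). split.
  - intros HG x Hx. specialize (HG x Hx). rewrite <- Hprox in HG.
    apply not_all_ex_not in HG. destruct HG as [U HU].
    apply imply_to_and in HU. destruct HU as [HU Hfar].
    exists U. split; [exact HU|]. intros y Hy. apply NNPP. intros HGy.
    apply Hfar. exists x, y. auto.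
  - intros HG x Hx Hnear. rewrite <- Hprox in Hnear.
    destruct (HG x Hx) as [U [HU HUG]].
    destruct (Hnear U HU) as (a & b & -> & Hb & Hab). exact (Hb (HUG b Hab)).
Qed.

Lemma pigeonhole_profiles {T} (Ps : list (set T)) (l : list T) :
  NoDup l -> 2 ^ length Ps < length l ->
  exists i j, In i l /\ In j l /\ i <> j /\ forall P, In P Ps -> (P i <-> P j).
Proof.
  revert l. induction Ps as [|P Ps IH]; intros l Hnd Hlong.
  - destruct l as [|i [|j l]]; simpl in Hlong; try lia.
    exists i, j. split; [left; reflexivity | split; [right; left; reflexivity | split]].
    + intros ->. inversion Hnd as [|? ? Hnin]. apply Hnin. left. reflexivity.
    + intros _ [].
  - set (b := fun i => if excluded_middle_informative (P i) then true else false).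
    assert (Hb : forall i, b i = true <-> P i).
    { intros i. unfold b. destruct (excluded_middle_informative (P i)) as [HP | HP];
        split; intros H; solve [auto | discriminate | contradiction]. }
    pose proof (filter_length b l) as Hsplit. simpl in Hlong.
    destruct (Nat.lt_ge_cases (2 ^ length Ps) (length (filter b l))) as [Hbig | Hsmall].
    + destruct (IH _ (NoDup_filter b Hnd) Hbig) as (i & j & Hi & Hj & Hij & Hag).
      apply filter_In in Hi as [Hi Hbi]. apply filter_In in Hj as [Hj Hbj].
      exists i, j. split; [exact Hi | split; [exact Hj | split; [exact Hij|]]].
      intros Q [<- | HQ]; [split; intros _; apply Hb; assumption | auto].
    + assert (Hbig : 2 ^ length Ps < length (filter (fun x => negb (b x)) l)) by lia.
      destruct (IH _ (NoDup_filter _ Hnd) Hbig) as (i & j & Hi & Hj & Hij & Hag).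
      apply filter_In in Hi as [Hi Hbi]. apply filter_In in Hj as [Hj Hbj].
      apply Bool.negb_true_iff in Hbi, Hbj.
      exists i, j. split; [exact Hi | split; [exact Hj | split; [exact Hij|]]].
      intros Q [<- | HQ]; [|auto].
      split; intros HQ; apply Hb in HQ; congruence.
Qed.

Section Chain.
Context {X : Type} (d : set X -> set X -> Prop) (N : nat -> set X) (Vd : set (rel X)).
Hypothesis N_step : forall i, subset (N i) (N (S i)).

Lemma chain_mono i j : i <= j -> subset (N i) (N j).
Proof. induction 1 as [|j _ IH]; intros x Hx; [exact Hx | apply N_step, IH, Hx]. Qed.

Lemma U_A_antitone (Sg Sg' : set nat) : subset Sg Sg' -> rsubset (U_A N Sg) (U_A N Sg').
Proof. intros Hsub x y H i Hi. apply H. intros HSg. apply Hi, Hsub, HSg. Qed.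

Lemma U_A_transitive Sg : transitive_rel (U_A N Sg).
Proof. intros x z [y [Hxy Hyz]] i Hi Hx. apply Hyz, Hxy; assumption. Qed.

Hypothesis Vd_filter : is_rel_filter Vd.

Lemma V_sigma_basis sigma W : is_nat_filter sigma -> V_sigma Vd N sigma W ->
  exists V Sg, Vd V /\ sigma Sg /\ rsubset (fun x y => V x y /\ U_A N Sg x y) W.
Proof.
  pose proof Vd_filter as (Vtop & Vup & Vmeet). intros (sT & _ & _ & smeet).
  revert W. apply (gen_filter_least _
    (fun W => exists V Sg, Vd V /\ sigma Sg /\ rsubset (fun x y => V x y /\ U_A N Sg x y) W)).
  - split; [|split].
    + exists (fun _ _ => True), (fun _ => True). repeat split; auto.
    + intros U U' (V & Sg & HV & HSg & HU) HUU'. exists V, Sg. repeat split; auto.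
      intros x y H. apply HUU', HU, H.
    + intros U U' (V & Sg & HV & HSg & HU) (V' & Sg' & HV' & HSg' & HU').
      exists (fun x y => V x y /\ V' x y), (fun n => Sg n /\ Sg' n).
      split; [apply Vmeet; assumption | split; [apply smeet; assumption|]].
      intros x y [[Hv Hv'] Hu].
      split; [apply HU | apply HU']; (split; [assumption|]);
        eapply U_A_antitone; try exact Hu; intros n [? ?]; assumption.
  - intros U [HU | (Sg & HSg & ->)].
    + exists U, (fun _ => True). repeat split; auto. intros x y [H _]. exact H.
    + exists (fun _ _ => True), Sg. repeat split; auto. intros x y [_ H]. exact H.
Qed.

Hypothesis Vd_N : forall i, Vd (U_of (N i)).
Hypothesis Vd_union : Vd (U_of (fun x => exists i, N i x)).

Lemma Vd_U_of_upto L : Vd (fun x y => forall i, i <= L -> U_of (N i) x y).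
Proof.
  pose proof Vd_filter as (_ & Vup & Vmeet). induction L as [|L IH].
  - apply (Vup _ _ (Vd_N 0)). intros x y H i Hi. replace i with 0 by lia. exact H.
  - apply (Vup _ _ (Vmeet _ _ IH (Vd_N (S L)))). intros x y [H HS] i Hi.
    destruct (Nat.eq_dec i (S L)) as [-> | Hne]; [exact HS | apply H; lia].
Qed.

(* If A lies inside some N_L, the finitely many U_{N_i}, i <= L, suffice;
   otherwise U_{⋃ N_i} yields b ∈ N_L, and a point of A outside N_L does the job. *)
Lemma near_witness_chain A B : qu_qprox Vd A B ->
  exists a b, A a /\ B b /\ U_A N (fun _ => False) a b.
Proof.
  intros Hnear. destruct (classic (exists L, subset A (N L))) as [[L HAL] | Hunbounded].
  - destruct (Hnear _ (Vd_U_of_upto L)) as (a & b & Ha & Hb & Hab).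
    assert (HbL : N L b).
    { destruct (Hab L (le_n L)) as [[_ H] | H]; [exact H | exfalso; apply H, HAL, Ha]. }
    exists a, b. repeat split; auto. intros i _ Hai. destruct (le_lt_dec i L) as [Hi | Hi].
    + destruct (Hab i Hi) as [[_ H] | H]; [exact H | contradiction].
    + apply (chain_mono L i); [lia | exact HbL].
  - destruct (Hnear _ Vd_union) as (a & b & Ha & Hb & [[_ [L HbL]] | Hna]).
    + assert (Hout : exists a', A a' /\ ~ N L a').
      { apply NNPP. intros Hc. apply Hunbounded. exists L. intros a' Ha'.
        apply NNPP. intros Hn. apply Hc. eauto. }
      destruct Hout as [a' [Ha' Hna']]. exists a', b. repeat split; auto.
      intros i _ Hi. destruct (le_lt_dec i L) as [HiL | HiL].
      * exfalso. apply Hna', (chain_mono i L HiL), Hi.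
      * apply (chain_mono L i); [lia | exact HbL].
    + exists a, b. repeat split; auto. intros i _ Hi. exfalso. apply Hna. exists i. exact Hi.
Qed.

Hypothesis Hq : is_quasi_proximity d.
Hypothesis Vd_coarsest : is_coarsest_in_pi d Vd.

Lemma V_sigma_in_pi sigma : is_nat_filter sigma -> in_pi d (V_sigma Vd N sigma).
Proof.
  intros Hsigma. pose proof Vd_coarsest as [[[_ [Vrefl Vroot]] Hprox] _].
  assert (Vd_incl : forall U, Vd U -> V_sigma Vd N sigma U)
    by (intros U HU; apply gen_filter_base; left; exact HU).
  split.
  - apply gen_filter_quasi_uniformity.
    + intros U [HU | (Sg & _ & ->)] x; [apply Vrefl, HU | intros i _ Hx; exact Hx].
    + intros U [HU | (Sg & HSg & ->)].
      * destruct (Vroot U HU) as [V [HV HVU]]. exists V. split; [apply Vd_incl, HV | exact HVU].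
      * exists (U_A N Sg). split; [apply gen_filter_base; right; eauto | apply U_A_transitive].
  - intros A B. split.
    + intros Hnear. apply Hprox. exact (qu_qprox_antitone _ _ A B Vd_incl Hnear).
    + intros HAB W HW.
      destruct (V_sigma_basis sigma W Hsigma HW) as (V & Sg & HV & HSg & HVW).
      destruct (coarsest_entourage_avoids d Hq Vd V Vd_coarsest HV) as [cs [Hcs HcsV]].
      assert (Hwitness : forall A B, d A B ->
                exists a b, A a /\ B b /\ U_A N (fun _ => False) a b)
        by (intros A' B' H'; apply near_witness_chain, Hprox, H').
      destruct (near_witness_avoiding d Hq _ Hwitness cs Hcs A B HAB)
        as (a & b & Ha & Hb & Hav & Hab).
      exists a, b. repeat split; auto. apply HVW. split; [apply HcsV, Hav|].
      eapply U_A_antitone; [|exact Hab]. intros n [].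
Qed.

Lemma V_sigma_transitive_base sigma : has_transitive_base Vd -> is_nat_filter sigma ->
  has_transitive_base (V_sigma Vd N sigma).
Proof.
  intros Htb Hsigma W HW.
  destruct (V_sigma_basis sigma W Hsigma HW) as (V & Sg & HV & HSg & HVW).
  destruct (Htb V HV) as [V' [HV' [Htr HV'V]]].
  exists (fun x y => V' x y /\ U_A N Sg x y). split; [|split].
  - apply gen_filter_is_rel_filter; apply gen_filter_base; [left; exact HV' | right; eauto].
  - intros x z [y [[H1 H2] [H3 H4]]].
    split; [apply Htr | apply (U_A_transitive Sg)]; exists y; auto.
  - intros x y [H1 H2]. apply HVW. split; [apply HV'V, H1 | exact H2].
Qed.

Variable pt : nat -> X.
Hypothesis pt_new : forall i, N (S i) (pt i) /\ ~ N i (pt i).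

Lemma U_A_new_points Sg i j : i < j -> (forall k, i < k <= j -> Sg k) ->
  U_A N Sg (pt i) (pt j).
Proof.
  intros Hij Hgap m HSm Hm. destruct (le_lt_dec m i) as [Hmi | Hmi].
  - exfalso. apply (proj2 (pt_new i)), (chain_mono m i Hmi), Hm.
  - destruct (le_lt_dec m j) as [Hmj | Hmj].
    + exfalso. apply HSm, Hgap. lia.
    + apply (chain_mono (S j) m); [lia | apply pt_new].
Qed.

Lemma not_U_A_new_points A i j : i < j -> ~ A j -> ~ U_A N A (pt i) (pt j).
Proof.
  intros Hij HAj H. apply (proj2 (pt_new j)), (H j HAj).
  apply (chain_mono (S i) j); [lia | apply pt_new].
Qed.

Lemma admissible_of_U_A_incl cs Sg A : far_pairs d cs ->
  rsubset (fun x y => avoids cs x y /\ U_A N Sg x y) (U_A N A) ->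
  admissible Sg (fun n => ~ A n).
Proof.
  intros Hcs Hincl. exists (2 ^ length cs). intros H [HHS [Hconv _]] l Hnd Hl.
  destruct (le_lt_dec (length l) (2 ^ length cs)) as [Hshort | Hlong]; [exact Hshort | exfalso].
  rewrite <- (length_map (fun (p : set X * set X) (i : nat) => snd p (pt i))) in Hlong.
  destruct (pigeonhole_profiles _ l Hnd Hlong) as (i & j & Hi & Hj & Hij & Hagree).
  assert (Hsame : forall p, In p cs -> (snd p (pt i) <-> snd p (pt j))).
  { intros p Hp. exact (Hagree (fun k => snd p (pt k)) (in_map _ _ _ Hp)). }
  assert (Hclash : forall i j, i < j -> In i l -> In j l ->
            (forall p, In p cs -> snd p (pt j) -> snd p (pt i)) -> False).
  { intros i' j' Hlt Hi' Hj' Hag. destruct (Hl i' Hi') as [HHi _]. destruct (Hl j' Hj') as [HHj HAj].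
    apply (not_U_A_new_points A i' j' Hlt HAj), Hincl. split.
    - apply (avoids_of_agree d Hq); assumption.
    - apply U_A_new_points; [exact Hlt|]. intros k Hk. apply HHS.
      destruct (Nat.eq_dec k j') as [-> | Hne]; [exact HHj | apply (Hconv i' j' k); auto; lia]. }
  destruct (Nat.lt_total i j) as [Hlt | [Heq | Hlt]].
  - apply (Hclash i j Hlt Hi Hj). intros p Hp. apply Hsame, Hp.
  - contradiction.
  - apply (Hclash j i Hlt Hj Hi). intros p Hp. apply Hsame, Hp.
Qed.

Lemma V_sigma_incl_filter_incl sigma1 sigma2 : is_p_filter sigma2 ->
  (forall U, V_sigma Vd N sigma1 U -> V_sigma Vd N sigma2 U) ->
  forall A, sigma1 A -> sigma2 A.
Proof.
  intros [Hsigma2 Hp2] Hincl A HA. pose proof Hsigma2 as (_ & _ & s2up & _).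
  assert (HUA : V_sigma Vd N sigma2 (U_A N A)) by (apply Hincl, gen_filter_base; right; eauto).
  destruct (V_sigma_basis sigma2 _ Hsigma2 HUA) as (V & Sg & HV & HSg & HVA).
  destruct (coarsest_entourage_avoids d Hq Vd V Vd_coarsest HV) as [cs [Hcs HcsV]].
  apply (s2up (fun n => Sg n /\ ~ ~ A n)).
  - apply Hp2; [exact HSg|]. apply (admissible_of_U_A_incl cs); [exact Hcs|].
    intros x y [Hav Hu]. apply HVA. split; [apply HcsV, Hav | exact Hu].
  - intros n [_ Hn]. apply NNPP, Hn.
Qed.

End Chain.

Theorem mainTheorem9 (X : Type) (tau : set (set X))
  (delta : set X -> set X -> Prop) (Vd : set (rel X)) (Nseq : nat -> set X) :
  is_topology tau ->
  is_quasi_proximity delta ->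
  qp_compatible delta tau ->
  is_coarsest_in_pi delta Vd ->
  has_transitive_base Vd ->
  (forall i, in_B tau Vd (Nseq i)) ->
  (forall i, subset (Nseq i) (Nseq (S i)) /\
             exists x, Nseq (S i) x /\ ~ Nseq i x) ->
  in_B tau Vd (fun x => exists i, Nseq i x) ->
  (forall sigma, is_p_filter sigma ->
      in_pi delta (V_sigma Vd Nseq sigma) /\ in_T tau (V_sigma Vd Nseq sigma)) /\
  (forall sigma1 sigma2, is_p_filter sigma1 -> is_p_filter sigma2 ->
      (forall U, V_sigma Vd Nseq sigma1 U -> V_sigma Vd Nseq sigma2 U) ->
      forall A, sigma1 A -> sigma2 A) /\
  (forall sigma1 sigma2, is_p_filter sigma1 -> is_p_filter sigma2 ->
      (forall U, V_sigma Vd Nseq sigma1 U <-> V_sigma Vd Nseq sigma2 U) ->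
      forall A, sigma1 A <-> sigma2 A).
Proof.
  intros _ Hq Hcomp Hcoarsest Htb HB Hstrict Hunion.
  assert (N_step : forall i, subset (Nseq i) (Nseq (S i))) by (intros i; apply Hstrict).
  assert (Vd_filter : is_rel_filter Vd) by (destruct Hcoarsest as [[[Hfilter _] _] _]; exact Hfilter).
  assert (Vd_N : forall i, Vd (U_of (Nseq i))) by (intros i; apply HB).
  destruct (functional_choice (fun i x => Nseq (S i) x /\ ~ Nseq i x)) as [pt Hpt];
    [intros i; apply Hstrict|].
  assert (Hincl : forall sigma1 sigma2, is_p_filter sigma1 -> is_p_filter sigma2 ->
            (forall U, V_sigma Vd Nseq sigma1 U -> V_sigma Vd Nseq sigma2 U) ->
            forall A, sigma1 A -> sigma2 A)
    by (intros s1 s2 _ Hs2;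
        exact (V_sigma_incl_filter_incl delta Nseq Vd N_step Vd_filter Hq Hcoarsest pt Hpt s1 s2 Hs2)).
  split; [|split].
  - intros sigma [Hsigma _].
    pose proof (V_sigma_in_pi delta Nseq Vd N_step Vd_filter Vd_N (proj2 Hunion) Hq Hcoarsest
                  sigma Hsigma) as Hpi.
    split; [exact Hpi|]. split.
    + exact (in_pi_qu_compatible delta _ tau Hpi Hcomp).
    + exact (V_sigma_transitive_base Nseq Vd Vd_filter sigma Htb Hsigma).
  - exact Hincl.
  - intros s1 s2 Hs1 Hs2 Heq A. split; apply Hincl; auto; intros U; apply Heq.
Qed.
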